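(* Let $a,b,c>0$ and let $F(x)=F(a,b;c;x)$ for $|x|<1$. If $a+b\ge c\ge 2ab$ and $c>a+b-1/2$, then $1/F(x)$ is concave on $(0,1)$. In particular, $$F\Big(\frac{x+y}{2}\Big)\le\frac{2F(x)F(y)}{F(x)+F(y)}$$ for all $x,y\in(0,1)$, with equality if and only if $x=y$.
   Context: $F(a,b;c;x)={}_2F_1(a,b;c;x)=\sum_{n=0}^\infty\frac{(a,n)(b,n)}{(c,n)\,n!}x^n$ for $|x|<1$ is the Gaussian hypergeometric function, where $(a,0)=1$ and $(a,n)=a(a+1)\cdots(a+n-1)$ for $n\ge1$. *)

From Stdlib Require Import Reals Arith.
From Coquelicot Require Import Coquelicot.
Open Scope R_scope.

Fixpoint poch (a : R) (n : nat) : R :=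
  match n with
  | O => 1
  | S k => poch a k * (a + INR k)
  end.

Definition hyp_coef (a b c : R) (n : nat) : R :=
  poch a n * poch b n / (poch c n * INR (fact n)).

(* F(a,b;c;x) = sum_{n>=0} (a,n)(b,n)/((c,n) n!) x^n  (meaningful for |x|<1,
   where the series converges). *)
Definition hypF (a b c x : R) : R :=
  Series (fun n => hyp_coef a b c n * x ^ n).

Definition concave_on (l u : R) (g : R -> R) : Prop :=
  forall x y t, l < x < u -> l < y < u -> 0 <= t <= 1 ->
    t * g x + (1 - t) * g y <= g (t * x + (1 - t) * y).

From Stdlib Require Import Reals Lra Lia Psatz.
From Coquelicot Require Import Coquelicot.
Open Scope R_scope.

(* The Taylor coefficients A_n of F are positive, A_0 = 1, and under the
   hypotheses their ratios A_{n+1}/A_n = (a+n)(b+n)/((c+n)(n+1)) are at most 1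
   and strictly increasing, i.e. (A_n) is log-convex.  By Kaluza's theorem the
   coefficients B_n of the reciprocal series 1/F = sum B_n x^n then satisfy
   B_0 = 1 and B_n <= 0 for n >= 1 (with |B_n| <= A_n, so it converges on
   (-1,1)).  Hence 1/F is a nonnegative combination of the concave functions
   -x^n plus a constant, i.e. concave, and strictly so at midpoints because
   B_2 = A_1^2 - A_2 < 0.  Midpoint concavity of 1/F is the harmonic-mean
   inequality for F. *)

Lemma sum_f_R0_nonneg (f : nat -> R) (N : nat) :
  (forall i, (i <= N)%nat -> 0 <= f i) -> 0 <= sum_f_R0 f N.
Proof.
  induction N as [|N IH]; intros Hf; simpl; [apply Hf; lia|].
  apply Rplus_le_le_0_compat; [apply IH; intros; apply Hf|apply Hf]; lia.
Qed.

Lemma sum_f_R0_le_first (f : nat -> R) (N : nat) :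
  (forall i, (1 <= i <= N)%nat -> f i <= 0) -> sum_f_R0 f N <= f 0%nat.
Proof.
  induction N as [|N IH]; intros Hf; simpl; [lra|].
  assert (f (S N) <= 0) by (apply Hf; lia).
  assert (sum_f_R0 f N <= f 0%nat) by (apply IH; intros; apply Hf; lia).
  lra.
Qed.

Lemma Series_ge_term (d : nat -> R) (k : nat) :
  (forall n, 0 <= d n) -> ex_series d -> d k <= Series d.
Proof.
  intros Hd Hex.
  apply Rle_trans with (sum_f_R0 d k).
  - destruct k as [|k]; simpl; [lra|].
    pose proof (cond_pos_sum d k Hd); lra.
  - apply sum_incr; [|exact Hd].
    apply is_series_Reals, Series_correct, Hex.
Qed.

Lemma convex_comb_in_interval (l u x y t : R) :
  l < x < u -> l < y < u -> 0 <= t <= 1 -> l < t * x + (1 - t) * y < u.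
Proof. intros Hx Hy Ht. destruct (Rle_lt_dec t 0); split; nra. Qed.

Lemma pow_convex_comb (x y t : R) (n : nat) : 0 <= x -> 0 <= y -> 0 <= t <= 1 ->
  (t * x + (1 - t) * y) ^ n <= t * x ^ n + (1 - t) * y ^ n.
Proof.
  intros Hx Hy Ht. induction n as [|n IH]; simpl; [lra|].
  assert (Hmono : 0 <= (x - y) * (x ^ n - y ^ n)).
  { destruct (Rle_dec x y).
    - assert (x ^ n <= y ^ n) by (apply pow_incr; lra). nra.
    - assert (y ^ n <= x ^ n) by (apply pow_incr; lra). nra. }
  assert (0 <= t * x + (1 - t) * y) by nra.
  apply Rle_trans with ((t * x + (1 - t) * y) * (t * x ^ n + (1 - t) * y ^ n)).
  - apply Rmult_le_compat_l; assumption.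
  - assert (0 <= t * (1 - t) * ((x - y) * (x ^ n - y ^ n))) by (apply Rmult_le_pos; nra).
    nra.
Qed.

Lemma CV_radius_ge_1 (u : nat -> R) :
  (forall n, Rabs (u n) <= 1) -> Rbar_le 1 (CV_radius u).
Proof.
  intros Hu. apply (proj1 (CV_radius_bounded u)). exists 1. intros n.
  rewrite pow1, Rmult_1_r. apply Hu.
Qed.

Lemma harmonic_mean_ge (u v w : R) : 0 < u -> 0 < v -> 0 < w ->
  (/ u + / v) / 2 <= / w ->
  w <= 2 * u * v / (u + v) /\ (w = 2 * u * v / (u + v) <-> (/ u + / v) / 2 = / w).
Proof.
  intros Hu Hv Hw Hle.
  assert (Hh : 0 < (/ u + / v) / 2)
    by (pose proof (Rinv_0_lt_compat u Hu); pose proof (Rinv_0_lt_compat v Hv); lra).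
  replace (2 * u * v / (u + v)) with (/ ((/ u + / v) / 2)) by (field; lra).
  split; [|split].
  - rewrite <- (Rinv_inv w). apply Rinv_le_contravar; assumption.
  - intros Heq. rewrite Heq, Rinv_inv. reflexivity.
  - intros Heq. rewrite Heq, Rinv_inv. reflexivity.
Qed.

Lemma Rdiv_lt_Rdiv_cross (x y z w : R) : 0 < y -> 0 < w -> x * w < z * y -> x / y < z / w.
Proof.
  intros Hy Hw H. apply (Rmult_lt_reg_r (y * w)); [nra|].
  replace (x / y * (y * w)) with (x * w) by (field; lra).
  replace (z / w * (y * w)) with (z * y) by (field; lra).
  exact H.
Qed.

Section Reciprocal.

Variable A : nat -> R.

(* [recip_table m k = recip k] for [k <= m]: tabulating the first [m + 1]
   coefficients makes the course-of-values recursion structural.  The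
   recursion is that of the reciprocal series only when [A 0 = 1]. *)
Fixpoint recip_table (m : nat) : nat -> R :=
  match m with
  | O => fun _ => 1
  | S m' => fun k =>
      if Nat.leb k m' then recip_table m' k
      else - sum_f_R0 (fun j => recip_table m' j * A (S m' - j)) m'
  end.

Definition recip (n : nat) : R := recip_table n n.

Lemma recip_table_eq (m k : nat) : (k <= m)%nat -> recip_table m k = recip k.
Proof.
  revert k; induction m as [|m IH]; intros k Hk.
  - replace k with 0%nat by lia. reflexivity.
  - cbn [recip_table]. destruct (Nat.leb k m) eqn:E.
    + apply IH, Nat.leb_le, E.
    + apply Nat.leb_gt in E. replace k with (S m) by lia.
      unfold recip. cbn [recip_table].
      replace (Nat.leb (S m) m) with false by (symmetry; apply Nat.leb_gt; lia).
      reflexivity.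
Qed.

Lemma recip_0 : recip 0 = 1.
Proof. reflexivity. Qed.

Lemma recip_S (m : nat) : recip (S m) = - sum_f_R0 (fun j => recip j * A (S m - j)) m.
Proof.
  unfold recip at 1; cbn [recip_table].
  replace (Nat.leb (S m) m) with false by (symmetry; apply Nat.leb_gt; lia).
  f_equal. apply sum_eq. intros j Hj. rewrite recip_table_eq; auto.
Qed.

Lemma recip_2 : recip 2 = A 1 ^ 2 - A 2.
Proof. rewrite recip_S; simpl. rewrite (recip_S 0); simpl. rewrite recip_0. ring. Qed.

Hypothesis A_0 : A 0 = 1.

Lemma PS_mult_recip_0 : PS_mult recip A 0 = 1.
Proof. unfold PS_mult; simpl. rewrite recip_0, A_0. ring. Qed.

Lemma PS_mult_recip_pos (n : nat) : (1 <= n)%nat -> PS_mult recip A n = 0.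
Proof.
  intros Hn. destruct n as [|n]; [lia|].
  unfold PS_mult. rewrite tech5, Nat.sub_diag, A_0, recip_S. ring.
Qed.

Lemma PSeries_recip_mul (x : R) :
  Rbar_lt (Rabs x) (CV_radius recip) -> Rbar_lt (Rabs x) (CV_radius A) ->
  PSeries recip x * PSeries A x = 1.
Proof.
  intros HB HA.
  rewrite <- PSeries_mult by assumption.
  rewrite PSeries_decr_1 by (apply ex_pseries_mult; assumption).
  rewrite (PSeries_ext _ (fun _ => 0)) by (intro n; apply PS_mult_recip_pos; lia).
  rewrite PSeries_const_0, PS_mult_recip_0. ring.
Qed.

Definition ratio (n : nat) : R := A (S n) / A n.

Section Kaluza.

Hypothesis A_pos : forall n, 0 < A n.
Hypothesis ratio_le_succ : forall n, ratio n <= ratio (S n).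

Lemma A_S_ratio (n : nat) : A (S n) = A n * ratio n.
Proof. unfold ratio. field. apply Rgt_not_eq, A_pos. Qed.

Lemma ratio_mono (m n : nat) : (m <= n)%nat -> ratio m <= ratio n.
Proof.
  induction 1 as [|n _ IH]; [lra|]. eapply Rle_trans; [exact IH|apply ratio_le_succ].
Qed.

Lemma recip_nonpos (n : nat) : (1 <= n)%nat -> recip n <= 0.
Proof.
  induction n as [n IH] using Wf_nat.lt_wf_ind; intros Hn.
  destruct n as [|N1]; [lia|]. rewrite recip_S.
  destruct (Nat.eq_dec N1 0) as [->|HN1].
  - simpl. rewrite recip_0. pose proof (A_pos 1). lra.
  - (* Kaluza's trick: subtract ratio N1 times the vanishing convolution at N1. *)
    assert (Hsplit : sum_f_R0 (fun j => recip j * A (S N1 - j)) N1 =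
      sum_f_R0 (fun j => recip j * A (N1 - j) * (ratio (N1 - j) - ratio N1)) N1
      + ratio N1 * PS_mult recip A N1).
    { unfold PS_mult. rewrite scal_sum, <- plus_sum. apply sum_eq. intros j Hj.
      replace (S N1 - j)%nat with (S (N1 - j)) by lia. rewrite A_S_ratio. ring. }
    rewrite Hsplit, PS_mult_recip_pos, Rmult_0_r, Rplus_0_r by lia.
    enough (0 <= sum_f_R0 (fun j => recip j * A (N1 - j) * (ratio (N1 - j) - ratio N1)) N1)
      by lra.
    apply sum_f_R0_nonneg. intros [|j] Hj.
    + rewrite Nat.sub_0_r. lra.
    + assert (recip (S j) <= 0) by (apply IH; lia).
      assert (ratio (N1 - S j) <= ratio N1) by (apply ratio_mono; lia).
      pose proof (A_pos (N1 - S j)).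
      assert (0 <= - recip (S j) * A (N1 - S j)) by nra.
      nra.
Qed.

Lemma Rabs_recip_le (n : nat) : Rabs (recip n) <= A n.
Proof.
  destruct n as [|m].
  - rewrite recip_0, A_0, Rabs_R1. lra.
  - rewrite Rabs_left1 by (apply recip_nonpos; lia).
    rewrite recip_S, Ropp_involutive.
    replace (A (S m)) with (recip 0 * A (S m - 0)) by (rewrite recip_0, Nat.sub_0_r; ring).
    apply sum_f_R0_le_first. intros j Hj.
    assert (recip j <= 0) by (apply recip_nonpos; lia).
    pose proof (A_pos (S m - j)). nra.
Qed.

Lemma recip_2_neg : ratio 0 < ratio 1 -> recip 2 < 0.
Proof.
  intros Hlt. rewrite recip_2, (A_S_ratio 1), (A_S_ratio 0), A_0.
  assert (0 < ratio 0) by (unfold ratio; apply Rdiv_lt_0_compat; apply A_pos).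
  nra.
Qed.

End Kaluza.

End Reciprocal.

Section ConcavePSeries.

Variable B : nat -> R.
Hypothesis B_nonpos : forall n, (1 <= n)%nat -> B n <= 0.
Hypothesis B_radius : Rbar_le 1 (CV_radius B).

Lemma ex_series_PSeries_terms (x : R) : Rabs x < 1 -> ex_series (fun n => B n * x ^ n).
Proof.
  intros Hx. apply ex_series_Rabs, CV_disk_inside.
  apply Rbar_lt_le_trans with 1; [exact Hx|exact B_radius].
Qed.

Lemma PSeries_concavity_gap (x y t : R) : 0 <= x < 1 -> 0 <= y < 1 -> 0 <= t <= 1 ->
  - B 2 * (t * (1 - t) * (x - y) ^ 2)
    <= PSeries B (t * x + (1 - t) * y) - t * PSeries B x - (1 - t) * PSeries B y.
Proof.
  intros Hx Hy Ht. set (m := t * x + (1 - t) * y).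
  assert (Hm : 0 <= m < 1).
  { pose proof (convex_comb_in_interval (-1) 1 x y t ltac:(lra) ltac:(lra) Ht).
    unfold m; split; [nra|lra]. }
  assert (Hex : forall z, 0 <= z < 1 -> ex_series (fun n => B n * z ^ n))
    by (intros z Hz; apply ex_series_PSeries_terms; rewrite Rabs_pos_eq; lra).
  set (d n := B n * (m ^ n - t * x ^ n - (1 - t) * y ^ n)).
  assert (Em := Hex m Hm).
  (* [scal], [plus] and [opp] on [R_NormedModule] reduce to the field operations. *)
  assert (Ex : ex_series (fun n => t * (B n * x ^ n)))
    by exact (ex_series_scal_l t _ (Hex x Hx)).
  assert (Ey : ex_series (fun n => (1 - t) * (B n * y ^ n)))
    by exact (ex_series_scal_l (1 - t) _ (Hex y Hy)).
  assert (Emx : ex_series (fun n => B n * m ^ n - t * (B n * x ^ n)))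
    by exact (ex_series_minus _ _ Em Ex).
  assert (Hd_ex : ex_series d).
  { eapply ex_series_ext; [|exact (ex_series_minus _ _ Emx Ey)].
    intros n. change (B n * m ^ n - t * (B n * x ^ n) - (1 - t) * (B n * y ^ n) = d n).
    unfold d. ring. }
  assert (Hgap : PSeries B m - t * PSeries B x - (1 - t) * PSeries B y = Series d).
  { unfold PSeries. rewrite <- !Series_scal_l, <- !Series_minus by assumption.
    apply Series_ext. intros n. unfold d. ring. }
  assert (Hd_nonneg : forall n, 0 <= d n).
  { intros [|n]; unfold d; [simpl; lra|].
    pose proof (B_nonpos (S n) ltac:(lia)).
    pose proof (pow_convex_comb x y t (S n) ltac:(lra) ltac:(lra) Ht) as Hpow.
    fold m in Hpow. nra. }
  assert (Hd_2 : d 2%nat = - B 2 * (t * (1 - t) * (x - y) ^ 2)) by (unfold d, m; simpl; ring).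
  rewrite Hgap, <- Hd_2. apply Series_ge_term; assumption.
Qed.

Lemma PSeries_concave : concave_on 0 1 (PSeries B).
Proof.
  intros x y t Hx Hy Ht.
  pose proof (PSeries_concavity_gap x y t ltac:(lra) ltac:(lra) Ht).
  pose proof (B_nonpos 2 ltac:(lia)).
  assert (0 <= t * (1 - t) * (x - y) ^ 2) by (apply Rmult_le_pos; [nra|apply pow2_ge_0]).
  nra.
Qed.

Lemma PSeries_midpoint_lt (x y : R) : B 2 < 0 -> 0 <= x < 1 -> 0 <= y < 1 -> x <> y ->
  (PSeries B x + PSeries B y) / 2 < PSeries B ((x + y) / 2).
Proof.
  intros HB2 Hx Hy Hxy.
  pose proof (PSeries_concavity_gap x y (1 / 2) Hx Hy ltac:(lra)) as Hgap.
  replace (1 / 2 * x + (1 - 1 / 2) * y) with ((x + y) / 2) in Hgap by field.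
  assert (0 < (x - y) ^ 2) by (apply pow2_gt_0; lra).
  nra.
Qed.

End ConcavePSeries.

Lemma poch_pos (a : R) (n : nat) : 0 < a -> 0 < poch a n.
Proof.
  intros Ha. induction n as [|n IH]; simpl; [lra|].
  apply Rmult_lt_0_compat; [exact IH|]. pose proof (pos_INR n). lra.
Qed.

Lemma hyp_coef_pos (a b c : R) (n : nat) : 0 < a -> 0 < b -> 0 < c -> 0 < hyp_coef a b c n.
Proof.
  intros Ha Hb Hc. unfold hyp_coef. apply Rdiv_lt_0_compat.
  - apply Rmult_lt_0_compat; apply poch_pos; assumption.
  - apply Rmult_lt_0_compat; [apply poch_pos; assumption|apply INR_fact_lt_0].
Qed.

Lemma hyp_coef_0 (a b c : R) : hyp_coef a b c 0 = 1.
Proof. unfold hyp_coef; simpl. field. Qed.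

Lemma ratio_hyp_coef (a b c : R) (n : nat) : 0 < a -> 0 < b -> 0 < c ->
  ratio (hyp_coef a b c) n = (a + INR n) * (b + INR n) / ((c + INR n) * (INR n + 1)).
Proof.
  intros Ha Hb Hc. unfold ratio, hyp_coef. cbn [poch].
  rewrite fact_simpl, mult_INR, S_INR.
  pose proof (pos_INR n). pose proof (INR_fact_lt_0 n).
  pose proof (poch_pos a n Ha). pose proof (poch_pos b n Hb). pose proof (poch_pos c n Hc).
  field. repeat split; lra.
Qed.

Section Hypergeometric.

Variables a b c : R.
Hypotheses (Ha : 0 < a) (Hb : 0 < b) (Hc : 0 < c).
Hypotheses (Hsum : a + b >= c) (Hprod : c >= 2 * a * b) (Hhalf : c > a + b - 1 / 2).

Lemma ratio_hyp_coef_lt_succ (n : nat) :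
  ratio (hyp_coef a b c) n < ratio (hyp_coef a b c) (S n).
Proof.
  rewrite !ratio_hyp_coef, S_INR by assumption. set (N := INR n).
  assert (HN : 0 <= N) by apply pos_INR.
  apply Rdiv_lt_Rdiv_cross; [nra|nra|].
  set (s := a + b). set (p := a * b).
  (* The cross-multiplied difference is a quadratic in N with positive coefficients. *)
  assert (E : (a + (N + 1)) * (b + (N + 1)) * ((c + N) * (N + 1)) -
              (a + N) * (b + N) * ((c + (N + 1)) * (N + 1 + 1)) =
              (c + 1 - s) * N ^ 2 + (3 * c + 1 - s - 2 * p) * N
              + ((c - 2 * p) * (1 + s - p) + 2 * p * (s - p)))
    by (unfold s, p; ring).
  assert (Hp : 0 < p) by (apply Rmult_lt_0_compat; assumption).
  assert (0 <= (c + 1 - s) * N ^ 2) by (apply Rmult_le_pos; [unfold s; lra|apply pow2_ge_0]).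
  assert (0 <= (3 * c + 1 - s - 2 * p) * N) by (apply Rmult_le_pos; [unfold s, p in *; lra|lra]).
  assert (0 <= (c - 2 * p) * (1 + s - p)) by (apply Rmult_le_pos; unfold s, p in *; lra).
  assert (0 < 2 * p * (s - p)) by (apply Rmult_lt_0_compat; unfold s, p in *; lra).
  lra.
Qed.

Lemma ratio_hyp_coef_le_1 (n : nat) : ratio (hyp_coef a b c) n <= 1.
Proof.
  rewrite ratio_hyp_coef by assumption. pose proof (pos_INR n).
  apply (Rdiv_le_1 _ ((c + INR n) * (INR n + 1))); [nra|].
  assert (0 <= (c + 1 - (a + b)) * INR n) by (apply Rmult_le_pos; lra).
  nra.
Qed.

Lemma hyp_coef_le_1 (n : nat) : hyp_coef a b c n <= 1.
Proof.
  induction n as [|n IH]; [rewrite hyp_coef_0; lra|].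
  rewrite A_S_ratio by (intros; apply hyp_coef_pos; assumption).
  pose proof (hyp_coef_pos a b c n Ha Hb Hc).
  pose proof (ratio_hyp_coef_le_1 n).
  assert (0 <= ratio (hyp_coef a b c) n).
  { unfold ratio. apply Rlt_le, Rdiv_lt_0_compat; apply hyp_coef_pos; assumption. }
  nra.
Qed.

Lemma recip_hyp_coef_nonpos (n : nat) : (1 <= n)%nat -> recip (hyp_coef a b c) n <= 0.
Proof.
  apply recip_nonpos; [apply hyp_coef_0| |].
  - intros k; apply hyp_coef_pos; assumption.
  - intros k; apply Rlt_le, ratio_hyp_coef_lt_succ.
Qed.

Lemma Rabs_recip_hyp_coef_le_1 (n : nat) : Rabs (recip (hyp_coef a b c) n) <= 1.
Proof.
  eapply Rle_trans; [apply Rabs_recip_le|apply hyp_coef_le_1].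
  - apply hyp_coef_0.
  - intros k; apply hyp_coef_pos; assumption.
  - intros k; apply Rlt_le, ratio_hyp_coef_lt_succ.
Qed.

Lemma CV_radius_hyp_coef : Rbar_le 1 (CV_radius (hyp_coef a b c)).
Proof.
  apply CV_radius_ge_1. intros n.
  rewrite Rabs_pos_eq by (apply Rlt_le, hyp_coef_pos; assumption).
  apply hyp_coef_le_1.
Qed.

Lemma CV_radius_recip_hyp_coef : Rbar_le 1 (CV_radius (recip (hyp_coef a b c))).
Proof. apply CV_radius_ge_1, Rabs_recip_hyp_coef_le_1. Qed.

Lemma inv_hypF (x : R) : Rabs x < 1 -> / hypF a b c x = PSeries (recip (hyp_coef a b c)) x.
Proof.
  intros Hx.
  assert (HGF : PSeries (recip (hyp_coef a b c)) x * hypF a b c x = 1).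
  { apply PSeries_recip_mul; [apply hyp_coef_0| |];
      apply Rbar_lt_le_trans with 1;
      auto using CV_radius_hyp_coef, CV_radius_recip_hyp_coef. }
  assert (hypF a b c x <> 0) by (intros HF; rewrite HF, Rmult_0_r in HGF; lra).
  rewrite <- (Rmult_1_l (/ hypF a b c x)), <- HGF. field. assumption.
Qed.

Lemma hypF_pos (x : R) : 0 <= x < 1 -> 0 < hypF a b c x.
Proof.
  intros Hx. unfold hypF. apply Rlt_le_trans with 1; [lra|].
  replace 1 with (hyp_coef a b c 0 * x ^ 0) by (rewrite hyp_coef_0; ring).
  apply (Series_ge_term (fun n => hyp_coef a b c n * x ^ n) 0).
  - intros n. apply Rmult_le_pos; [apply Rlt_le, hyp_coef_pos; assumption|apply pow_le; lra].
  - apply ex_series_Rabs, CV_disk_inside, Rbar_lt_le_trans with 1;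
      [simpl; rewrite Rabs_pos_eq; lra|apply CV_radius_hyp_coef].
Qed.

Lemma inv_hypF_concave : concave_on 0 1 (fun x => / hypF a b c x).
Proof.
  intros x y t Hx Hy Ht.
  pose proof (convex_comb_in_interval 0 1 x y t Hx Hy Ht).
  rewrite !inv_hypF by (rewrite Rabs_pos_eq; lra).
  apply PSeries_concave; auto using recip_hyp_coef_nonpos, CV_radius_recip_hyp_coef.
Qed.

Lemma inv_hypF_midpoint_lt (x y : R) : 0 < x < 1 -> 0 < y < 1 -> x <> y ->
  (/ hypF a b c x + / hypF a b c y) / 2 < / hypF a b c ((x + y) / 2).
Proof.
  intros Hx Hy Hxy.
  rewrite !inv_hypF by (rewrite Rabs_pos_eq; lra).
  apply PSeries_midpoint_lt; auto using recip_hyp_coef_nonpos, CV_radius_recip_hyp_coef; try lra.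
  apply recip_2_neg; [apply hyp_coef_0| |apply ratio_hyp_coef_lt_succ].
  intros k; apply hyp_coef_pos; assumption.
Qed.

End Hypergeometric.

Theorem theorem1p4 (a b c : R) :
  0 < a -> 0 < b -> 0 < c ->
  a + b >= c -> c >= 2 * a * b -> c > a + b - 1 / 2 ->
  concave_on 0 1 (fun x => / hypF a b c x) /\
  (forall x y, 0 < x < 1 -> 0 < y < 1 ->
     hypF a b c ((x + y) / 2)
       <= 2 * hypF a b c x * hypF a b c y / (hypF a b c x + hypF a b c y) /\
     (hypF a b c ((x + y) / 2)
        = 2 * hypF a b c x * hypF a b c y / (hypF a b c x + hypF a b c y)
      <-> x = y)).
Proof.
  intros Ha Hb Hc Hsum Hprod Hhalf.
  pose proof (inv_hypF_concave a b c Ha Hb Hc Hsum Hprod Hhalf) as Hconc.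
  split; [exact Hconc|]. intros x y Hx Hy.
  assert (Hmid : (/ hypF a b c x + / hypF a b c y) / 2 <= / hypF a b c ((x + y) / 2)).
  { specialize (Hconc x y (1 / 2) Hx Hy ltac:(lra)). cbv beta in Hconc.
    replace (1 / 2 * x + (1 - 1 / 2) * y) with ((x + y) / 2) in Hconc by field. lra. }
  destruct (harmonic_mean_ge (hypF a b c x) (hypF a b c y) (hypF a b c ((x + y) / 2)))
    as [Hle Heq]; try (apply hypF_pos; auto; lra); [exact Hmid|].
  split; [exact Hle|]. rewrite Heq. split.
  - intros Hhm. destruct (Req_dec x y) as [|Hxy]; [assumption|].
    pose proof (inv_hypF_midpoint_lt a b c Ha Hb Hc Hsum Hprod Hhalf x y Hx Hy Hxy). lra.
  - intros <-. replace ((x + x) / 2) with x by field. field.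
    apply Rgt_not_eq, hypF_pos; auto; lra.
Qed.
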